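(* Let $\{x_t\}_{t\ge0}$ be an aperiodic and $\varphi$-irreducible Markov chain on $\mathbb{X}$ with transition kernel $P$, and let $\{\mathcal{T}_n\}_{n\ge0}$ be a non-decreasing sequence of random times with $\mathcal{T}_0=0$ that is independent of $\{x_t\}$. Then any set $C$ that is small for $\{x_t\}$ is petite for the sampled process $\{x_{\mathcal{T}_n}\}$.
   Context: A set $C$ of positive maximal-irreducibility measure is $(m,\delta,\nu)$-small for $\{x_t\}$ if $P^m(x,B)\ge\delta\nu(B)$ for all $x\in C$ and Borel $B$, for some $m\ge1$, $\delta\in(0,1)$ and positive measure $\nu$. A set is petite for a process with one-step transition kernel $Q$ if $\sum_{n\ge0}a(n)Q^n(x,B)\ge\kappa(B)$ for all $x\in C$ and Borel $B$, for some probability distribution $a$ on $\mathbb{Z}_+$ and nonzero positive measure $\kappa$; for the sampled process the relevant kernel is $x\mapsto P^{\mathcal{T}_1}(x,\cdot)=\sum_k P(\mathcal{T}_1=k)P^k(x,\cdot)$. *)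

From HB Require Import structures.
From mathcomp Require Import all_boot all_order all_algebra.
From mathcomp Require Import all_classical all_reals all_analysis.
Set Implicit Arguments. Unset Strict Implicit. Unset Printing Implicit Defensive.
Import Order.TTheory GRing.Theory Num.Theory.
Import numFieldNormedType.Exports.
Local Open Scope classical_set_scope.
Local Open Scope ring_scope.
Local Open Scope ereal_scope.

Section markov_defs.
Context {d : measure_display} {T : measurableType d} {R : realType}.

Fixpoint kpow (K : T -> set T -> \bar R) (n : nat) (x : T) (B : set T) : \bar R :=
  match n with
  | 0%N => (\1_B x)%:E
  | n'.+1 => \int[K x]_y kpow K n' y B
  end.

Definition irr_measure (K : T -> set T -> \bar R)
    (phi : {measure set T -> \bar R}) : Prop :=
  forall A, measurable A -> 0 < phi A ->
    forall x, exists n, (0 < n)%N /\ 0 < kpow K n x A.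

Definition phi_irreducible (K : T -> set T -> \bar R) : Prop :=
  exists phi : {measure set T -> \bar R}, 0 < phi setT /\ irr_measure K phi.

Definition max_irr_measure (K : T -> set T -> \bar R)
    (psi : {measure set T -> \bar R}) : Prop :=
  irr_measure K psi /\
  forall phi : {measure set T -> \bar R}, irr_measure K phi ->
    forall A, measurable A -> psi A = 0 -> phi A = 0.

Definition dcycle (K : T -> set T -> \bar R) (psi : {measure set T -> \bar R})
    (p : nat) (D : nat -> set T) : Prop :=
  [/\ forall i, (i < p)%N -> measurable (D i),
      forall i j, (i < p)%N -> (j < p)%N -> i <> j -> D i `&` D j = set0,
      forall i, (i < p)%N -> forall x, D i x -> K x (D (i.+1 %% p)%N) = 1
    & psi (~` \bigcup_(i in [set i | (i < p)%N]) D i) = 0].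

(** aperiodic: the period (largest p admitting a p-cycle) is 1, i.e. there is
    no p-cycle with p >= 2 *)
Definition aperiodic (K : T -> set T -> \bar R) : Prop :=
  forall psi, max_irr_measure K psi ->
    forall p, (2 <= p)%N -> ~ exists D, dcycle K psi p D.

Definition small_set (K : T -> set T -> \bar R) (C : set T) : Prop :=
  [/\ measurable C,
      exists psi, max_irr_measure K psi /\ 0 < psi C
    & exists (m : nat) (delta : R) (nu : {measure set T -> \bar R}),
      [/\ (1 <= m)%N, (0 < delta < 1)%R, 0 < nu setT &
        forall x, C x -> forall B, measurable B ->
          delta%:E * nu B <= kpow K m x B]].

Definition petite (Q : T -> set T -> \bar R) (C : set T) : Prop :=
  exists (a : nat -> R) (kappa : {measure set T -> \bar R}),
    [/\ forall n, (0 <= a n)%R,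
        \sum_(0 <= n <oo) (a n)%:E = 1,
        0 < kappa setT &
        forall x, C x -> forall B, measurable B ->
          kappa B <= \sum_(0 <= n <oo) (a n)%:E * kpow Q n x B].

End markov_defs.

(** one-step kernel of the sampled process: P^{T_1}(x,B) = sum_k Pr(T_1=k) P^k(x,B) *)
Definition sampled_kernel {d dO : measure_display} {T : measurableType d}
    {Om : measurableType dO} {R : realType}
    (P : T -> set T -> \bar R) (Pr : probability Om R) (Tm : nat -> Om -> nat)
    : T -> set T -> \bar R :=
  fun x B => (\sum_(0 <= k <oo) Pr (Tm 1%N @^-1` [set k]) * kpow P k x B)%E.

From HB Require Import structures.
From mathcomp Require Import all_boot all_order all_algebra.
From mathcomp Require Import all_classical all_reals all_analysis.
From mathcomp Require Import measurable_realfun.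
Import Order.TTheory GRing.Theory Num.Theory.
Local Open Scope classical_set_scope.
Local Open Scope ring_scope.
Local Open Scope ereal_scope.
Set Implicit Arguments.
Unset Strict Implicit.
Unset Printing Implicit Defensive.

(* If T_1 puts mass p > 0 on some k0 >= 1, the sampled kernel Q dominates
   p P^k0, hence Q^m dominates p^m P^(m k0) = p^m P^m P^(m k0 - m), which on
   the small set C dominates p^m delta nu P^(m k0 - m), a nonzero measure.
   So a single power of Q minorizes a nonzero measure uniformly on C, and C is
   petite with the sampling distribution concentrated at m. *)

Section integral_kcomp_noparam.
Context d0 d1 d2 (T0 : measurableType d0) (T1 : measurableType d1)
  (T2 : measurableType d2) (R : realType).
Variables (k1 : R.-spker T0 ~> T1) (k2 : R.-spker T1 ~> T2).

Lemma integral_kcomp_noparam x (f : T2 -> \bar R) : (forall z, 0 <= f z) ->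
  measurable_fun [set: T2] f ->
  \int[mkcomp_noparam k1 k2 x]_z f z = \int[k1 x]_y \int[k2 y]_z f z.
Proof.
move=> f0 mf.
(* kcomp_noparam is kcomp against the library-local kernel_snd k2 = k2 \o snd *)
have -> : (mkcomp_noparam k1 k2 x : set T2 -> \bar R) =
  kcomp k1 (kernel.kernel_snd (T0 := T0) k2) x by [].
exact: integral_kcomp.
Qed.
End integral_kcomp_noparam.

Section kiter.
Context d (T : measurableType d) (R : realType).
Variable K : R.-spker T ~> T.

Fixpoint kiter n : R.-spker T ~> T :=
  if n is n'.+1 then mkcomp_noparam K (kiter n')
  else kdirac (@measurable_id _ T setT).

Lemma kiterS n x B : kiter n.+1 x B = \int[K x]_y kiter n y B.
Proof. by []. Qed.

Lemma kpowE n x : kpow (fun x => K x) n x = kiter n x.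
Proof.
elim: n x => [//|n IH] x; apply/funext => B /=.
by apply: eq_integral => y _; rewrite IH.
Qed.

Lemma kiterD a b x B : measurable B ->
  kiter (a + b) x B = \int[kiter a x]_y kiter b y B.
Proof.
move=> mB; elim: a x => [|a IH] x.
  have -> : (kiter 0 x : set T -> \bar R) = \d_x by [].
  by rewrite add0n integral_dirac ?diracT ?mul1e //; exact: measurable_kernel.
rewrite addSn kiterS integral_kcomp_noparam//; last exact: measurable_kernel.
by apply: eq_integral => y _; rewrite IH.
Qed.

End kiter.

Lemma kiterM d (T : measurableType d) (R : realType) (K : R.-spker T ~> T)
    k n x B : measurable B ->
  kiter (kiter K k) n x B = kiter K (n * k) x B.
Proof.
move=> mB; elim: n x => [//|n IH] x.
rewrite kiterS mulSn kiterD//.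
by apply: eq_integral => y _; rewrite IH.
Qed.

Lemma kiter_prob d (T : measurableType d) (R : realType) (K : R.-pker T ~> T)
    n x : kiter K n x setT = 1.
Proof.
elim: n x => [|n IH] x; first exact: diracT.
rewrite kiterS; under eq_integral do rewrite IH.
by rewrite integral_cst// mul1e prob_kernel.
Qed.

Lemma ge0_le_integral_scale d (T : measurableType d) (R : realType)
    (mu nu : {measure set T -> \bar R}) (c : {nonneg R}) (f : T -> \bar R) :
  (forall B, measurable B -> c%:num%:E * mu B <= nu B) ->
  (forall x, 0 <= f x) -> measurable_fun [set: T] f ->
  c%:num%:E * \int[mu]_x f x <= \int[nu]_x f x.
Proof.
move=> munu f0 mf; rewrite -ge0_integral_mscale//.
exact: ge0_le_measure_integral.
Qed.

Lemma kiter_ge_scale d (T : measurableType d) (R : realType)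
    (K L : R.-spker T ~> T) (c : {nonneg R}) :
  (forall x B, measurable B -> c%:num%:E * L x B <= K x B) ->
  forall n x B, measurable B ->
  (c%:num ^+ n)%:E * kiter L n x B <= kiter K n x B.
Proof.
move=> LK n x B mB; elim: n x => [|n IH] x; first by rewrite expr0 mul1e.
have mLn : measurable_fun [set: T] (kiter L n ^~ B) by exact: measurable_kernel.
rewrite !kiterS exprS EFinM -muleA -ge0_integralZl//.
apply: le_trans (ge0_le_integral_scale (LK x) _ _) _.
- by move=> y; rewrite mule_ge0// lee_fin.
- exact: measurable_funeM.
by apply: ge0_le_integral => //;
  [exact: measurable_funeM|exact: measurable_kernel].
Qed.

Section kcomp_measure.
Context d d' (X : measurableType d) (Y : measurableType d') (R : realType).
Variables (mu : {measure set X -> \bar R}) (k : R.-ker X ~> Y).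

Definition kcomp_measure (B : set Y) := \int[mu]_x k x B.

Let kcomp_measure0 : kcomp_measure set0 = 0.
Proof. by apply: integral0_eq => x _; rewrite measure0. Qed.

Let kcomp_measure_ge0 B : 0 <= kcomp_measure B.
Proof. exact: integral_ge0. Qed.

Let kcomp_measure_sigma_additive : semi_sigma_additive kcomp_measure.
Proof.
move=> U mU tU mUU; rewrite [X in _ --> X](_ : _ =
  \int[mu]_x (\sum_(n <oo) k x (U n))); last first.
  apply: eq_integral => x _.
  by apply/esym/cvg_lim => //; exact/measure_semi_sigma_additive.
apply/cvg_closeP; split.
  by apply: is_cvg_nneseries => n _ _; exact: integral_ge0.
rewrite closeE// integral_nneseries// => n.
exact: measurable_kernel.
Qed.

HB.instance Definition _ := isMeasure.Build _ _ R kcomp_measure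
  kcomp_measure0 kcomp_measure_ge0 kcomp_measure_sigma_additive.

End kcomp_measure.

Lemma kcomp_measure_setT d (T : measurableType d) (R : realType)
    (mu : {measure set T -> \bar R}) (K : R.-pker T ~> T) n :
  kcomp_measure mu (kiter K n) setT = mu setT.
Proof.
rewrite /kcomp_measure (eq_integral (cst 1)) ?integral_cst ?mul1e// => x _.
exact: kiter_prob.
Qed.

Lemma kiter_minorD d (T : measurableType d) (R : realType) (K : R.-spker T ~> T)
    (nu : {measure set T -> \bar R}) (delta : {nonneg R}) m j x :
  (forall B, measurable B -> delta%:num%:E * nu B <= kiter K m x B) ->
  forall B, measurable B ->
  delta%:num%:E * kcomp_measure nu (kiter K j) B <= kiter K (m + j) x B.
Proof.
move=> minor B mB; rewrite kiterD//.
by apply: ge0_le_integral_scale => //; exact: measurable_kernel.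
Qed.

Lemma eseries_single (R : realType) (f : nat -> \bar R) m :
  (forall n, n != m -> f n = 0) -> \sum_(0 <= n <oo) f n = f m.
Proof.
move=> h; apply: lim_near_cst => //; near=> n.
have hn : (m < n)%N by near: n; exists m.+1.
rewrite (big_cat_nat (n := m.+1)) //= big_nat_recr //= big1_seq ?add0e.
  rewrite big1_seq ?adde0 // => i /andP[_].
  rewrite mem_index_iota => /andP[mi _].
  by apply: h; rewrite neq_ltn mi orbT.
move=> i /andP[_]; rewrite mem_index_iota => /andP[_ im].
by apply: h; rewrite neq_ltn im.
Unshelve. all: by end_near.
Qed.

Lemma petite_kpow_minor d (T : measurableType d) (R : realType)
    (Q : T -> set T -> \bar R) (C : set T) n
    (kappa : {measure set T -> \bar R}) :
  0 < kappa setT ->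
  (forall x, C x -> forall B, measurable B -> kappa B <= kpow Q n x B) ->
  petite Q C.
Proof.
move=> kappa_gt0 minor.
pose a k : R := if k == n then 1%R else 0%R.
have sum_a (u : nat -> \bar R) : \sum_(0 <= k <oo) (a k)%:E * u k = u n.
  rewrite (eseries_single (m := n)) /a ?eqxx ?mul1e// => k /negbTE ->.
  by rewrite mul0e.
exists a, kappa; split => //.
- by move=> k; rewrite /a; case: ifP.
- by have := sum_a (fun=> 1); under eq_eseriesr do rewrite mule1.
- by move=> x Cx B mB; rewrite sum_a; exact: minor.
Qed.

Section sampled_kernel.
Context d dO (T : measurableType d) (Om : measurableType dO) (R : realType).
Variables (P : R.-pker T ~> T) (Pr : probability Om R) (N : Om -> nat).
Hypothesis mN : forall k, measurable (N @^-1` [set k]).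

Lemma sum_probability_fibers : \sum_(0 <= k <oo) Pr (N @^-1` [set k]) = 1.
Proof.
have -> : 1 = Pr (\bigcup_k N @^-1` [set k]).
  rewrite -(probability_setT Pr); congr (Pr _).
  by apply/seteqP; split=> w // _; exists (N w).
apply/cvg_lim => //; apply: measure_semi_sigma_additive => //.
- by move=> i j _ _ [w [/= <- <-]].
- exact: bigcup_measurable.
Qed.

Lemma exists_fiber_gt0 : Pr (N @^-1` [set 0%N]) < 1 ->
  exists k, (0 < k)%N /\ 0 < Pr (N @^-1` [set k]).
Proof.
move=> P0_lt1; apply: contrapT => none.
suff : Pr (N @^-1` [set 0%N]) = 1 by move=> P0; rewrite P0 ltxx in P0_lt1.
rewrite -sum_probability_fibers (eseries_single (m := 0%N)) => // k k_neq0.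
apply/eqP; rewrite eq_le measure_ge0 andbT leNgt; apply/negP => Pk_gt0.
by apply: none; exists k; rewrite lt0n.
Qed.

Definition fiber_weight k : {nonneg R} :=
  NngNum (fine_ge0 (measure_ge0 Pr (N @^-1` [set k]))).

Lemma fiber_weightE k : (fiber_weight k)%:num%:E = Pr (N @^-1` [set k]).
Proof.
apply: fineK; rewrite ge0_fin_numE//.
exact: le_lt_trans (probability_le1 Pr (mN k)) (ltry 1).
Qed.

Definition ksampled_fun (x : T) : {measure set T -> \bar R} :=
  mseries (fun k => mscale (fiber_weight k) (kiter P k x)) 0.

Lemma ksampled_funE x B :
  ksampled_fun x B = \sum_(0 <= k <oo) Pr (N @^-1` [set k]) * kiter P k x B.
Proof.
transitivity (\sum_(0 <= k <oo) (fiber_weight k)%:num%:E * kiter P k x B) => //.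
by apply: eq_eseriesr => k _; rewrite fiber_weightE.
Qed.

Let measurable_ksampled B : measurable B ->
  measurable_fun [set: T] (ksampled_fun ^~ B).
Proof.
move=> mB; apply: ge0_emeasurable_sum => [k y _ _|k _].
  by rewrite mule_ge0.
by apply: measurable_funeM; exact: measurable_kernel.
Qed.

Let ksampled_setT x : ksampled_fun x setT = 1.
Proof.
rewrite ksampled_funE -sum_probability_fibers.
by apply: eq_eseriesr => k _; rewrite kiter_prob mule1.
Qed.

HB.instance Definition _ :=
  isKernel.Build _ _ _ _ _ ksampled_fun measurable_ksampled.

(* Only a packed structure, not an instance: the total mass 1 needs mN. *)
Definition ksampled : R.-pker T ~> T := HB.pack ksampled_fun
  (Kernel_isProbability.Build _ _ _ _ _ ksampled_fun ksampled_setT).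

Lemma ksampled_ge k x B : measurable B ->
  (fiber_weight k)%:num%:E * kiter P k x B <= ksampled x B.
Proof.
move=> mB; rewrite [leRHS]/= /mseries.
apply: le_trans (nneseries_lim_ge k.+1 _) => //.
rewrite big_nat_recr//= leeDr//; apply: sume_ge0 => i _.
by rewrite /mscale mule_ge0.
Qed.

End sampled_kernel.

Lemma sampled_kernelE d dO (T : measurableType d) (Om : measurableType dO)
    (R : realType) (P : R.-pker T ~> T) (Pr : probability Om R)
    (Tm : nat -> Om -> nat) (mN : forall k, measurable (Tm 1%N @^-1` [set k])) :
  sampled_kernel (fun x => P x) Pr Tm = fun x => ksampled P Pr mN x.
Proof.
apply/funext => x; apply/funext => B.
transitivity (ksampled_fun P Pr (Tm 1%N) x B); last by [].
by rewrite ksampled_funE//; apply: eq_eseriesr => k _; rewrite kpowE.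
Qed.

Theorem mainTheorem2 (d dO : measure_display) (T : measurableType d)
    (Om : measurableType dO) (R : realType)
    (P : R.-pker T ~> T) (Pr : probability Om R) (Tm : nat -> Om -> nat)
    (hTm_meas : forall n k, measurable (Tm n @^-1` [set k]))
    (hT0 : forall w, Tm 0%N w = 0%N)
    (hTmono : forall n w, (Tm n w <= Tm n.+1 w)%N)
    (hTnondeg : (Pr (Tm 1%N @^-1` [set 0%N]) < 1)%E)
    (hirr : phi_irreducible (fun x => P x))
    (haper : aperiodic (fun x => P x))
    (C : set T) :
  small_set (fun x => P x) C ->
  petite (sampled_kernel (fun x => P x) Pr Tm) C.
Proof.
move=> [_ _ [m [delta [nu [_ /andP[delta_gt0 _] nu_gt0 minor]]]]].
have mN := hTm_meas 1%N.
have [k0 [k0_gt0 Pk0_gt0]] := exists_fiber_gt0 mN hTnondeg.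
pose c := fiber_weight Pr (Tm 1%N) k0.
have c_gt0 : (0 < c%:num)%R by rewrite -lte_fin fiber_weightE.
pose delta' : {nonneg R} := NngNum (ltW delta_gt0).
pose cm : {nonneg R} := NngNum (exprn_ge0 m (ltW c_gt0)).
pose kappa : {measure set T -> \bar R} := mscale cm
  (mscale delta' (kcomp_measure nu (kiter P (m * k0 - m)))).
rewrite (sampled_kernelE P Pr mN).
apply: (petite_kpow_minor (n := m) (kappa := kappa)).
  have -> : kappa setT = cm%:num%:E * (delta'%:num%:E * nu setT).
    by rewrite -(kcomp_measure_setT nu P (m * k0 - m)).
  by rewrite !mule_gt0// lte_fin exprn_gt0.
move=> x Cx B mB; rewrite kpowE.
apply: le_trans (kiter_ge_scale (ksampled_ge P Pr mN k0) m x mB).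
rewrite kiterM// -(subnKC (leq_pmulr m k0_gt0)).
apply: lee_wpmul2l => //; apply: kiter_minorD => // A mA.
by rewrite -kpowE; exact: minor.
Qed.
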